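(* For $n\geq 5$, the commutator subgroup $\Gamma_2(VB_n)$ of the virtual braid group $VB_n$ is perfect, i.e. $\Gamma_2(VB_n)=[\Gamma_2(VB_n),\Gamma_2(VB_n)]$.
   Context: The virtual braid group $VB_n$ is the group with generators $\sigma_i,\rho_i$ ($i=1,\dots,n-1$) and defining relations: $\sigma_i\sigma_{i+1}\sigma_i=\sigma_{i+1}\sigma_i\sigma_{i+1}$ ($1\le i\le n-2$); $\sigma_i\sigma_j=\sigma_j\sigma_i$ ($|i-j|\geq 2$); $\rho_i\rho_{i+1}\rho_i=\rho_{i+1}\rho_i\rho_{i+1}$ ($1\le i\le n-2$); $\rho_i\rho_j=\rho_j\rho_i$ ($|i-j|\geq 2$); $\rho_i^2=1$; $\sigma_i\rho_j=\rho_j\sigma_i$ ($|i-j|\geq2$); $\rho_i\rho_{i+1}\sigma_i=\sigma_{i+1}\rho_i\rho_{i+1}$ ($1\le i\le n-2$). $\Gamma_2(G)=[G,G]$. *)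

(* The virtual braid group VB_n is encoded by its presentation:
   elements are words in the generators sigma_i, rho_i (1 <= i <= n-1) and
   their inverses, modulo the congruence generated by free cancellation and
   the defining relations of VB_n. *)
From Stdlib Require Import List Arith.
Import ListNotations.

Inductive gen : Type := sig (i : nat) | rho (i : nat).

(* a letter: a generator together with a flag; true = inverse of the generator *)
Definition letter : Type := (gen * bool)%type.
Definition word : Type := list letter.

Definition gidx (g : gen) : nat := match g with sig i => i | rho i => i end.

Definition valid (n : nat) (w : word) : Prop :=
  Forall (fun x => 1 <= gidx (fst x) /\ gidx (fst x) <= n - 1) w.

Definition S (i : nat) : word := [(sig i, false)].
Definition P (i : nat) : word := [(rho i, false)].

Definition inv_letter (x : letter) : letter := (fst x, negb (snd x)).
Definition winv (w : word) : word := rev (map inv_letter w).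

Inductive vb_rel (n : nat) : word -> word -> Prop :=
| rel_braid_s i : 1 <= i -> i <= n - 2 ->
    vb_rel n (S i ++ S (i+1) ++ S i) (S (i+1) ++ S i ++ S (i+1))
| rel_comm_s i j : 1 <= i -> i <= n - 1 -> 1 <= j -> j <= n - 1 ->
    i + 2 <= j \/ j + 2 <= i -> vb_rel n (S i ++ S j) (S j ++ S i)
| rel_braid_r i : 1 <= i -> i <= n - 2 ->
    vb_rel n (P i ++ P (i+1) ++ P i) (P (i+1) ++ P i ++ P (i+1))
| rel_comm_r i j : 1 <= i -> i <= n - 1 -> 1 <= j -> j <= n - 1 ->
    i + 2 <= j \/ j + 2 <= i -> vb_rel n (P i ++ P j) (P j ++ P i)
| rel_invol_r i : 1 <= i -> i <= n - 1 -> vb_rel n (P i ++ P i) []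
| rel_comm_sr i j : 1 <= i -> i <= n - 1 -> 1 <= j -> j <= n - 1 ->
    i + 2 <= j \/ j + 2 <= i -> vb_rel n (S i ++ P j) (P j ++ S i)
| rel_mixed i : 1 <= i -> i <= n - 2 ->
    vb_rel n (P i ++ P (i+1) ++ S i) (S (i+1) ++ P i ++ P (i+1)).

Inductive veq (n : nat) : word -> word -> Prop :=
| veq_refl w : veq n w w
| veq_sym u v : veq n u v -> veq n v u
| veq_trans u v w : veq n u v -> veq n v w -> veq n u w
| veq_cancel u v x : veq n (u ++ x :: inv_letter x :: v) (u ++ v)
| veq_rel u v l r : vb_rel n l r -> veq n (u ++ l ++ v) (u ++ r ++ v).

Definition comm (a b : word) : word := winv a ++ winv b ++ a ++ b.

Inductive gen_sub (n : nat) (X : word -> Prop) : word -> Prop :=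
| gs_one : gen_sub n X []
| gs_base w : valid n w -> X w -> gen_sub n X w
| gs_inv w : gen_sub n X w -> gen_sub n X (winv w)
| gs_mul u v : gen_sub n X u -> gen_sub n X v -> gen_sub n X (u ++ v)
| gs_eq u v : valid n v -> veq n u v -> gen_sub n X u -> gen_sub n X v.

Definition comm_sub (n : nat) (H K : word -> Prop) : word -> Prop :=
  gen_sub n (fun w => exists a b, valid n a /\ valid n b /\ H a /\ K b /\ w = comm a b).

Definition Gamma2 (n : nat) : word -> Prop :=
  comm_sub n (fun _ => True) (fun _ => True).

From Stdlib Require Import List Arith Lia Setoid Morphisms.
Import ListNotations.

(* Write G = VB_n and K = [Gamma_2(G), Gamma_2(G)], a normal subgroup of G. By the
   commutator identities [uv, y] = [u, y]^v [v, y] and [u^-1, y] = ([u, y]^-1)^(u^-1),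
   a normal subgroup contains Gamma_2(G) as soon as it contains [s, t] for all
   generators s, t, so it suffices to show [x, y] in K for generators x, y.

   Modulo Gamma_2(G) all sigma_i coincide, and so do all rho_i. For a generator y let
   N_y be the set of g in Gamma_2(G) with [g, y] in K; it is a normal subgroup of G.
   If some index l is far from the indices of s and t, then [s, t] commutes with the
   generator y' of the kind of y with index l, and y = y' h with h in Gamma_2(G), so
   [[s, t], y] = [[s, t], h] lies in K. For n >= 5 such an l exists unless the indices
   are far apart (then [s, t] = 1) or lie in {2, 3}, a case conjugated by rho_1 rho_2 rho_3
   to indices in {1, 2}. Hence Gamma_2(G) is contained in N_y. Finally choose z of the
   kind of x commuting with y; then x = z h with h in Gamma_2(G) and
   [x, y] = [z, y]^h [h, y] = [h, y] lies in K. *)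

Lemma veq_app_l n u u' v : veq n u u' -> veq n (u ++ v) (u' ++ v).
Proof.
  induction 1 as [w|u0 v0 _ IH|u0 v0 w0 _ IH1 _ IH2|u0 v0 x|u0 v0 l r Hr].
  - apply veq_refl.
  - now apply veq_sym.
  - eapply veq_trans; eauto.
  - rewrite <- !app_assoc. exact (veq_cancel n u0 (v0 ++ v) x).
  - rewrite <- !app_assoc. exact (veq_rel n u0 (v0 ++ v) l r Hr).
Qed.

Lemma veq_app_r n u v v' : veq n v v' -> veq n (u ++ v) (u ++ v').
Proof.
  induction 1 as [w|u0 v0 _ IH|u0 v0 w0 _ IH1 _ IH2|u0 v0 x|u0 v0 l r Hr].
  - apply veq_refl.
  - now apply veq_sym.
  - eapply veq_trans; eauto.
  - rewrite !(app_assoc u u0). exact (veq_cancel n (u ++ u0) v0 x).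
  - rewrite !(app_assoc u u0). exact (veq_rel n (u ++ u0) v0 l r Hr).
Qed.

#[global] Instance veq_Equivalence n : Equivalence (veq n).
Proof. split; [exact (veq_refl n) | exact (veq_sym n) | exact (veq_trans n)]. Qed.

#[global] Instance app_veq_Proper n : Proper (veq n ==> veq n ==> veq n) (@app letter).
Proof.
  intros u u' Hu v v' Hv. transitivity (u' ++ v); [apply veq_app_l | apply veq_app_r]; auto.
Qed.

Lemma veq_of_rel n l r : vb_rel n l r -> veq n l r.
Proof. intros H. pose proof (veq_rel n [] [] l r H) as E. now rewrite !app_nil_r in E. Qed.

Lemma inv_letterK x : inv_letter (inv_letter x) = x.
Proof. destruct x as [g b]; unfold inv_letter; simpl; now rewrite Bool.negb_involutive. Qed.

Lemma winv_nil : winv [] = [].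
Proof. reflexivity. Qed.

Lemma winv_app u v : winv (u ++ v) = winv v ++ winv u.
Proof. unfold winv. now rewrite map_app, rev_app_distr. Qed.

Lemma winvK u : winv (winv u) = u.
Proof.
  unfold winv. rewrite map_rev, rev_involutive, map_map.
  rewrite <- (map_id u) at 2. apply map_ext, inv_letterK.
Qed.

Lemma veq_mulKV n u t : veq n (u ++ winv u ++ t) t.
Proof.
  revert t; induction u as [|x u IH]; intro t; [reflexivity|].
  change (x :: u) with ([x] ++ u). rewrite winv_app, <- !app_assoc, IH.
  exact (veq_cancel n [] t x).
Qed.

Lemma veq_mulVK n u t : veq n (winv u ++ u ++ t) t.
Proof. pose proof (veq_mulKV n (winv u) t) as H. now rewrite winvK in H. Qed.

Lemma veq_mulV n u : veq n (u ++ winv u) [].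
Proof. pose proof (veq_mulKV n u []) as H. now rewrite app_nil_r in H. Qed.

Lemma veq_Vmul n u : veq n (winv u ++ u) [].
Proof. pose proof (veq_mulVK n u []) as H. now rewrite app_nil_r in H. Qed.

#[global] Instance winv_veq_Proper n : Proper (veq n ==> veq n) winv.
Proof.
  intros u v H.
  transitivity (winv u ++ v ++ winv v); [now rewrite veq_mulV, app_nil_r|].
  transitivity (winv u ++ u ++ winv v); [|apply veq_mulVK].
  apply veq_app_r, veq_app_l. now symmetry.
Qed.

#[global] Instance comm_veq_Proper n : Proper (veq n ==> veq n ==> veq n) comm.
Proof. intros u u' Hu v v' Hv. unfold comm. now rewrite Hu, Hv. Qed.

Definition conjg (u g : word) : word := winv g ++ u ++ g.

Ltac group_simpl :=
  unfold comm, conjg;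
  rewrite ?winv_app, ?winvK, ?winv_nil, ?app_nil_l, ?app_nil_r, <- ?app_assoc;
  repeat (rewrite veq_mulKV || rewrite veq_mulVK || rewrite veq_mulV || rewrite veq_Vmul);
  rewrite ?app_nil_r; reflexivity.

Lemma comm_app_l n u v y : veq n (comm (u ++ v) y) (conjg (comm u y) v ++ comm v y).
Proof. group_simpl. Qed.

Lemma comm_app_r n x u v : veq n (comm x (u ++ v)) (comm x v ++ conjg (comm x u) v).
Proof. group_simpl. Qed.

Lemma comm_winv_l n u y : veq n (comm (winv u) y) (conjg (winv (comm u y)) (winv u)).
Proof. group_simpl. Qed.

Lemma comm_winv_r n x u : veq n (comm x (winv u)) (conjg (winv (comm x u)) (winv u)).
Proof. group_simpl. Qed.

Lemma comm_nil_l n y : veq n (comm [] y) [].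
Proof. group_simpl. Qed.

Lemma comm_nil_r n x : veq n (comm x []) [].
Proof. group_simpl. Qed.

Lemma conjg_comm n u v g : veq n (conjg (comm u v) g) (comm (conjg u g) (conjg v g)).
Proof. group_simpl. Qed.

Lemma comm_conjg_l n u g y :
  veq n (comm (conjg u g) y) (conjg (comm u (y ++ comm y (winv g))) g).
Proof. group_simpl. Qed.

Lemma conjg_app n u v g : veq n (conjg (u ++ v) g) (conjg u g ++ conjg v g).
Proof. group_simpl. Qed.

Lemma conjg_nil n g : veq n (conjg [] g) [].
Proof. group_simpl. Qed.

Lemma conjg_winv u g : conjg (winv u) g = winv (conjg u g).
Proof. unfold conjg. now rewrite !winv_app, winvK, app_assoc. Qed.

Lemma conjg_winv_of_veq n c x x' : veq n (c ++ x) (x' ++ c) -> veq n (conjg x (winv c)) x'.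
Proof.
  intros H. unfold conjg. rewrite winvK, app_assoc, H, <- app_assoc, veq_mulV, app_nil_r.
  reflexivity.
Qed.

Lemma valid_nil n : valid n [].
Proof. constructor. Qed.

Lemma valid_app n u v : valid n u -> valid n v -> valid n (u ++ v).
Proof. intros; now apply Forall_app. Qed.

Lemma valid_app_inv n u v : valid n (u ++ v) -> valid n u /\ valid n v.
Proof. apply Forall_app. Qed.

Lemma valid_winv n u : valid n u -> valid n (winv u).
Proof.
  intros H. apply Forall_rev, Forall_map.
  eapply Forall_impl; [|exact H]. now intros [g b].
Qed.

Lemma valid_comm n u v : valid n u -> valid n v -> valid n (comm u v).
Proof. intros. unfold comm. auto using valid_app, valid_winv. Qed.

Lemma valid_conjg n u g : valid n u -> valid n g -> valid n (conjg u g).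
Proof. intros. unfold conjg. auto using valid_app, valid_winv. Qed.

#[global] Hint Resolve valid_nil valid_app valid_winv valid_comm valid_conjg : vb.

Record is_subgroup n (H : word -> Prop) : Prop := {
  sub_valid : forall w, H w -> valid n w;
  sub_nil : H [];
  sub_app : forall u v, H u -> H v -> H (u ++ v);
  sub_winv : forall u, H u -> H (winv u);
  sub_veq : forall u v, valid n v -> veq n u v -> H u -> H v }.

Record is_normal n (H : word -> Prop) : Prop := {
  normal_sub :> is_subgroup n H;
  normal_conjg : forall u g, valid n g -> H u -> H (conjg u g) }.

Arguments sub_nil {n H}.
Arguments sub_app {n H} _ {u v}.
Arguments sub_winv {n H} _ {u}.
Arguments normal_conjg {n H} _ {u g}.

Lemma sub_transport {n H} u {v} : is_subgroup n H -> valid n v -> veq n v u -> H u -> H v.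
Proof. intros HS Vv E Hu. apply (sub_veq _ _ HS u v); auto. now symmetry. Qed.

Lemma sub_trivial {n H u} : is_subgroup n H -> valid n u -> veq n u [] -> H u.
Proof. intros HS Vu E. exact (sub_transport [] HS Vu E (sub_nil HS)). Qed.

Lemma gen_sub_valid n X w : gen_sub n X w -> valid n w.
Proof. induction 1; auto with vb. Qed.

Lemma gen_sub_subgroup n X : is_subgroup n (gen_sub n X).
Proof.
  split.
  - apply gen_sub_valid.
  - apply gs_one.
  - apply gs_mul.
  - apply gs_inv.
  - intros u v Vv E Hu. exact (gs_eq n X u v Vv E Hu).
Qed.

Lemma gen_sub_min n X H : is_subgroup n H -> (forall w, valid n w -> X w -> H w) ->
  forall w, gen_sub n X w -> H w.
Proof.
  intros HS HX w Hw. induction Hw as [| | |u v _ Hu _ Hv|u v Vv E _ Hu].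
  - exact (sub_nil HS).
  - auto.
  - now apply (sub_winv HS).
  - now apply (sub_app HS).
  - exact (sub_veq _ _ HS u v Vv E Hu).
Qed.

Lemma gen_sub_normal n X :
  (forall w g, valid n w -> valid n g -> X w -> gen_sub n X (conjg w g)) ->
  is_normal n (gen_sub n X).
Proof.
  intros HX. pose proof (gen_sub_subgroup n X) as HS.
  split; [exact HS|]. intros u g Vg Hu.
  induction Hu as [|w Vw Xw|w Hw IH|u v Hu IHu Hv IHv|u v Vv E Hu IH].
  - apply (sub_trivial HS); auto with vb. apply conjg_nil.
  - auto.
  - rewrite conjg_winv. now apply gs_inv.
  - apply (sub_transport (conjg u g ++ conjg v g) HS); auto using gs_mul, conjg_app.
    apply valid_conjg; eauto using valid_app, gen_sub_valid.
  - apply (sub_veq _ _ HS (conjg u g)); auto with vb. unfold conjg. now rewrite E.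
Qed.

Definition Gamma2_derived n : word -> Prop := comm_sub n (Gamma2 n) (Gamma2 n).

Lemma Gamma2_valid n w : Gamma2 n w -> valid n w.
Proof. apply gen_sub_valid. Qed.

#[global] Hint Resolve Gamma2_valid : vb.

Lemma Gamma2_comm n u v : valid n u -> valid n v -> Gamma2 n (comm u v).
Proof. intros. apply gs_base; auto with vb. now exists u, v. Qed.

Lemma Gamma2_derived_comm n u v : Gamma2 n u -> Gamma2 n v -> Gamma2_derived n (comm u v).
Proof. intros. apply gs_base; auto with vb. exists u, v. auto 6 with vb. Qed.

Lemma Gamma2_normal n : is_normal n (Gamma2 n).
Proof.
  apply gen_sub_normal. intros w g Vw Vg (a & b & Va & Vb & _ & _ & ->).
  apply (sub_transport (comm (conjg a g) (conjg b g)) (gen_sub_subgroup _ _)); auto with vb.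
  - apply conjg_comm.
  - apply Gamma2_comm; auto with vb.
Qed.

Lemma Gamma2_derived_normal n : is_normal n (Gamma2_derived n).
Proof.
  apply gen_sub_normal. intros w g Vw Vg (a & b & Va & Vb & Ha & Hb & ->).
  apply (sub_transport (comm (conjg a g) (conjg b g)) (gen_sub_subgroup _ _)); auto with vb.
  - apply conjg_comm.
  - apply Gamma2_derived_comm; apply (normal_conjg (Gamma2_normal n)); auto.
Qed.

Lemma Gamma2_derived_sub_Gamma2 n w : Gamma2_derived n w -> Gamma2 n w.
Proof.
  apply gen_sub_min; [apply Gamma2_normal|].
  intros w' _ (a & b & Va & Vb & _ & _ & ->). now apply Gamma2_comm.
Qed.

Definition gword (g : gen) : word := [(g, false)].

Lemma valid_letter n g b : 1 <= gidx g <= n - 1 -> valid n [(g, b)].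
Proof. intros. repeat constructor; simpl; lia. Qed.

Lemma valid_gword n g : 1 <= gidx g <= n - 1 -> valid n (gword g).
Proof. apply valid_letter. Qed.

#[global] Hint Resolve valid_gword : vb.

Section NormalCommutators.

Variables (n : nat) (H : word -> Prop).
Hypothesis HN : is_normal n H.

Lemma normal_comm_winv_l u y : valid n u -> valid n y -> H (comm u y) -> H (comm (winv u) y).
Proof.
  intros Vu Vy Huy. eapply (sub_transport _ HN); auto with vb; [apply comm_winv_l|].
  apply (normal_conjg HN); auto with vb. now apply (sub_winv HN).
Qed.

Lemma normal_comm_winv_r x u : valid n x -> valid n u -> H (comm x u) -> H (comm x (winv u)).
Proof.
  intros Vx Vu Hxu. eapply (sub_transport _ HN); auto with vb; [apply comm_winv_r|].
  apply (normal_conjg HN); auto with vb. now apply (sub_winv HN).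
Qed.

Lemma normal_comm_app_l u v y : valid n u -> valid n v -> valid n y ->
  H (comm u y) -> H (comm v y) -> H (comm (u ++ v) y).
Proof.
  intros Vu Vv Vy Huy Hvy. eapply (sub_transport _ HN); auto with vb; [apply comm_app_l|].
  apply (sub_app HN); auto. now apply (normal_conjg HN).
Qed.

Lemma normal_comm_app_r x u v : valid n x -> valid n u -> valid n v ->
  H (comm x u) -> H (comm x v) -> H (comm x (u ++ v)).
Proof.
  intros Vx Vu Vv Hxu Hxv. eapply (sub_transport _ HN); auto with vb; [apply comm_app_r|].
  apply (sub_app HN); auto. now apply (normal_conjg HN).
Qed.

Hypothesis H_comm_gens : forall s t : gen,
  1 <= gidx s <= n - 1 -> 1 <= gidx t <= n - 1 -> H (comm (gword s) (gword t)).

Lemma normal_comm_letters x y : valid n [x] -> valid n [y] -> H (comm [x] [y]).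
Proof.
  destruct x as [s []], y as [t []]; intros Vx Vy;
    apply Forall_inv in Vx, Vy; simpl in Vx, Vy;
    change [(s, true)] with (winv [(s, false)]); change [(t, true)] with (winv [(t, false)]);
    pose proof (H_comm_gens s t Vx Vy) as Hst; unfold gword in Hst;
    auto using normal_comm_winv_l, normal_comm_winv_r, valid_letter with vb.
Qed.

Lemma normal_comm_letter_word x v : valid n [x] -> valid n v -> H (comm [x] v).
Proof.
  intros Vx. induction v as [|y v IH]; intros Vv.
  - apply (sub_trivial HN); auto with vb. apply comm_nil_r.
  - change (y :: v) with ([y] ++ v) in *. apply valid_app_inv in Vv as [Vy Vv].
    auto using normal_comm_app_r, normal_comm_letters.
Qed.

Lemma normal_comm_words u v : valid n u -> valid n v -> H (comm u v).
Proof.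
  induction u as [|x u IH]; intros Vu Vv.
  - apply (sub_trivial HN); auto with vb. apply comm_nil_l.
  - change (x :: u) with ([x] ++ u) in *. apply valid_app_inv in Vu as [Vx Vu].
    auto using normal_comm_app_l, normal_comm_letter_word.
Qed.

Lemma Gamma2_sub_normal w : Gamma2 n w -> H w.
Proof.
  apply gen_sub_min; [exact HN|].
  intros w' _ (u & v & Vu & Vv & _ & _ & ->). now apply normal_comm_words.
Qed.

End NormalCommutators.

Definition far (i j : nat) : Prop := i + 2 <= j \/ j + 2 <= i.

Definition commute n (u v : word) : Prop := veq n (u ++ v) (v ++ u).

Lemma commute_far_gens n s t : 1 <= gidx s <= n - 1 -> 1 <= gidx t <= n - 1 ->
  far (gidx s) (gidx t) -> commute n (gword s) (gword t).
Proof.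
  unfold far, commute. destruct s as [i|i], t as [j|j]; simpl; intros.
  - apply veq_of_rel, rel_comm_s; lia.
  - apply veq_of_rel, rel_comm_sr; lia.
  - symmetry. apply veq_of_rel, rel_comm_sr; lia.
  - apply veq_of_rel, rel_comm_r; lia.
Qed.

Lemma commute_winv_l n u y : commute n u y -> commute n (winv u) y.
Proof.
  unfold commute. intros H.
  transitivity (winv u ++ y ++ u ++ winv u); [now rewrite veq_mulV, app_nil_r|].
  rewrite (app_assoc y u), <- H, <- app_assoc. apply veq_mulVK.
Qed.

Lemma commute_app_l n u v y : commute n u y -> commute n v y -> commute n (u ++ v) y.
Proof.
  unfold commute. intros Hu Hv. now rewrite <- app_assoc, Hv, app_assoc, Hu, app_assoc.
Qed.

Lemma commute_comm_l n u v y : commute n u y -> commute n v y -> commute n (comm u v) y.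
Proof. intros. unfold comm. auto using commute_app_l, commute_winv_l. Qed.

Lemma comm_trivial_of_commute n u v : commute n u v -> veq n (comm u v) [].
Proof. unfold commute, comm. intros H. now rewrite H, veq_mulVK, veq_Vmul. Qed.

Definition eqmod_Gamma2 n (u v : word) : Prop := Gamma2 n (winv u ++ v).

Lemma eqmod_Gamma2_refl n u : valid n u -> eqmod_Gamma2 n u u.
Proof.
  intros. apply (sub_trivial (Gamma2_normal n)); auto with vb. apply veq_Vmul.
Qed.

Lemma eqmod_Gamma2_sym n u v : eqmod_Gamma2 n u v -> eqmod_Gamma2 n v u.
Proof.
  unfold eqmod_Gamma2. intros H. apply (sub_winv (Gamma2_normal n)) in H.
  now rewrite winv_app, winvK in H.
Qed.

Lemma eqmod_Gamma2_trans n u v w :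
  eqmod_Gamma2 n u v -> eqmod_Gamma2 n v w -> eqmod_Gamma2 n u w.
Proof.
  unfold eqmod_Gamma2. intros Huv Hvw.
  assert (Vu := proj1 (valid_app_inv _ _ _ (Gamma2_valid _ _ Huv))).
  assert (Vw := proj2 (valid_app_inv _ _ _ (Gamma2_valid _ _ Hvw))).
  apply (sub_transport ((winv u ++ v) ++ winv v ++ w) (Gamma2_normal n)); auto with vb.
  - now rewrite <- app_assoc, veq_mulKV.
  - now apply (sub_app (Gamma2_normal n)).
Qed.

Lemma eqmod_Gamma2_of_conj n c x x' : valid n c -> valid n x -> valid n x' ->
  veq n (c ++ x) (x' ++ c) -> eqmod_Gamma2 n x x'.
Proof.
  intros Vc Vx Vx' E. apply (sub_transport (comm x (winv c)) (Gamma2_normal n)); auto with vb.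
  - unfold comm. rewrite winvK, (app_assoc c x), E, <- app_assoc, veq_mulV, app_nil_r.
    reflexivity.
  - apply Gamma2_comm; auto with vb.
Qed.

Lemma eqmod_Gamma2_chain n (X : nat -> word) :
  (forall i, 1 <= i <= n - 1 -> valid n (X i)) ->
  (forall i, 1 <= i -> i + 1 <= n - 1 -> eqmod_Gamma2 n (X i) (X (i + 1))) ->
  forall i j, 1 <= i <= n - 1 -> 1 <= j <= n - 1 -> eqmod_Gamma2 n (X i) (X j).
Proof.
  intros VX Hsucc.
  assert (Hup : forall d i, 1 <= i -> i + d <= n - 1 -> eqmod_Gamma2 n (X i) (X (i + d))).
  { induction d as [|d IH]; intros i Hi Hid.
    - rewrite Nat.add_0_r. apply eqmod_Gamma2_refl, VX. lia.
    - apply (eqmod_Gamma2_trans _ _ (X (i + d))); [apply IH; lia|].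
      replace (i + Datatypes.S d) with (i + d + 1) by lia. apply Hsucc; lia. }
  intros i j Hi Hj. destruct (Nat.le_gt_cases i j).
  - replace j with (i + (j - i)) by lia. apply Hup; lia.
  - apply eqmod_Gamma2_sym. replace i with (j + (i - j)) by lia. apply Hup; lia.
Qed.

Definition reindex (g : gen) (k : nat) : gen :=
  match g with sig _ => sig k | rho _ => rho k end.

Lemma gidx_reindex g k : gidx (reindex g k) = k.
Proof. now destruct g. Qed.

Lemma reindex_reindex g i j : reindex (reindex g i) j = reindex g j.
Proof. now destruct g. Qed.

Lemma reindex_gidx g : reindex g (gidx g) = g.
Proof. now destruct g. Qed.

(* Adjacent generators of the same kind are conjugate by [rho_i rho_(i+1)]. *)
Lemma eqmod_Gamma2_reindex n g k : 1 <= gidx g <= n - 1 -> 1 <= k <= n - 1 ->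
  eqmod_Gamma2 n (gword g) (gword (reindex g k)).
Proof.
  intros Hg Hk.
  assert (Vrr : forall i, 1 <= i -> i + 1 <= n - 1 -> valid n (P i ++ P (i + 1))).
  { intros i ??. apply valid_app; apply (valid_gword n (rho _)); simpl; lia. }
  destruct g as [j|j]; simpl in Hg |- *.
  - apply (eqmod_Gamma2_chain n (fun i => gword (sig i))); auto.
    + intros i ?. apply (valid_gword n (sig i)); simpl; lia.
    + intros i ??. apply (eqmod_Gamma2_of_conj n (P i ++ P (i + 1))); auto;
        try (apply (valid_gword n (sig _)); simpl; lia).
      rewrite <- app_assoc. apply veq_of_rel, rel_mixed; lia.
  - apply (eqmod_Gamma2_chain n (fun i => gword (rho i))); auto.
    + intros i ?. apply (valid_gword n (rho i)); simpl; lia.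
    + intros i ??. apply (eqmod_Gamma2_of_conj n (P i ++ P (i + 1))); auto;
        try (apply (valid_gword n (rho _)); simpl; lia).
      rewrite <- !app_assoc. apply veq_of_rel, rel_braid_r; lia.
Qed.

Lemma veq_in_context n u l r v : veq n l r -> veq n (u ++ l ++ v) (u ++ r ++ v).
Proof. intros H. now rewrite H. Qed.

Definition rho123 : word := P 1 ++ P 2 ++ P 3.

Lemma valid_rho123 n : 4 <= n -> valid n rho123.
Proof.
  intros. unfold rho123. repeat apply valid_app; apply (valid_gword n (rho _)); simpl; lia.
Qed.

Lemma conjg_rho123_reindex_succ n g : 4 <= n -> 1 <= gidx g <= 2 ->
  veq n (conjg (gword g) (winv rho123)) (gword (reindex g (gidx g + 1))).
Proof.
  intros Hn Hg. apply conjg_winv_of_veq. unfold rho123.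
  destruct g as [i|i]; simpl in Hg |- *; (assert (i = 1 \/ i = 2) as [-> | ->] by lia); simpl.
  - transitivity (P 1 ++ P 2 ++ S 1 ++ P 3).
    + apply (veq_in_context n (P 1 ++ P 2) (P 3 ++ S 1) (S 1 ++ P 3) []).
      symmetry. apply veq_of_rel, rel_comm_sr; lia.
    + apply (veq_in_context n [] (P 1 ++ P 2 ++ S 1) (S 2 ++ P 1 ++ P 2) (P 3)).
      apply veq_of_rel, (rel_mixed n 1); lia.
  - transitivity (P 1 ++ S 3 ++ P 2 ++ P 3).
    + apply (veq_in_context n (P 1) (P 2 ++ P 3 ++ S 2) (S 3 ++ P 2 ++ P 3) []).
      apply veq_of_rel, (rel_mixed n 2); lia.
    + apply (veq_in_context n [] (P 1 ++ S 3) (S 3 ++ P 1) (P 2 ++ P 3)).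
      symmetry. apply veq_of_rel, rel_comm_sr; lia.
  - transitivity (P 1 ++ P 2 ++ P 1 ++ P 3).
    + apply (veq_in_context n (P 1 ++ P 2) (P 3 ++ P 1) (P 1 ++ P 3) []).
      apply veq_of_rel, rel_comm_r; lia.
    + apply (veq_in_context n [] (P 1 ++ P 2 ++ P 1) (P 2 ++ P 1 ++ P 2) (P 3)).
      apply veq_of_rel, (rel_braid_r n 1); lia.
  - transitivity (P 1 ++ P 3 ++ P 2 ++ P 3).
    + apply (veq_in_context n (P 1) (P 2 ++ P 3 ++ P 2) (P 3 ++ P 2 ++ P 3) []).
      apply veq_of_rel, (rel_braid_r n 2); lia.
    + apply (veq_in_context n [] (P 1 ++ P 3) (P 3 ++ P 1) (P 2 ++ P 3)).
      apply veq_of_rel, rel_comm_r; lia.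
Qed.

Lemma conjg_rho123_reindex_pred n g : 4 <= n -> 2 <= gidx g <= 3 ->
  veq n (conjg (gword (reindex g (gidx g - 1))) (winv rho123)) (gword g).
Proof.
  intros Hn Hg. rewrite conjg_rho123_reindex_succ; rewrite ?gidx_reindex; [|lia..].
  rewrite reindex_reindex.
  now replace (gidx g - 1 + 1) with (gidx g) by lia; rewrite reindex_gidx.
Qed.

Definition centralizer_mod n (y g : word) : Prop :=
  Gamma2 n g /\ Gamma2_derived n (comm g y).

Lemma centralizer_mod_normal n y : valid n y -> is_normal n (centralizer_mod n y).
Proof.
  intros Vy. pose proof (Gamma2_normal n) as HG. pose proof (Gamma2_derived_normal n) as HK.
  split; [split|].
  - intros w [Hw _]. auto with vb.
  - split; [exact (sub_nil HG)|]. apply (sub_trivial HK); auto with vb. apply comm_nil_l.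
  - intros u v [Hu Ku] [Hv Kv]. split; [now apply (sub_app HG)|].
    apply (normal_comm_app_l n _ HK); auto with vb.
  - intros u [Hu Ku]. split; [now apply (sub_winv HG)|].
    apply (normal_comm_winv_l n _ HK); auto with vb.
  - intros u v Vv E [Hu Ku]. split; [exact (sub_veq _ _ HG u v Vv E Hu)|].
    apply (sub_transport (comm u y) HK); auto with vb. now rewrite E.
  - intros u g Vg [Hu Ku]. split; [now apply (normal_conjg HG)|].
    apply (sub_transport (conjg (comm u (y ++ comm y (winv g))) g) HK); auto with vb;
      [apply comm_conjg_l|].
    apply (normal_conjg HK); auto.
    apply (normal_comm_app_r n _ HK); auto with vb.
    apply Gamma2_derived_comm; auto. apply Gamma2_comm; auto with vb.
Qed.

Lemma centralizer_mod_of_commute n y y' c : valid n y -> valid n y' -> Gamma2 n c ->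
  eqmod_Gamma2 n y' y -> commute n c y' -> centralizer_mod n y c.
Proof.
  intros Vy Vy' Hc Hyy' Hcy'. split; [exact Hc|]. pose proof (Gamma2_derived_normal n) as HK.
  apply (sub_transport (comm c (y' ++ winv y' ++ y)) HK); auto with vb.
  - now rewrite veq_mulKV.
  - apply (normal_comm_app_r n _ HK); auto with vb.
    + apply (sub_trivial HK); auto with vb. now apply comm_trivial_of_commute.
    + now apply Gamma2_derived_comm.
Qed.

Lemma centralizer_mod_comm_gens_far n y s t l :
  1 <= gidx y <= n - 1 -> 1 <= gidx s <= n - 1 -> 1 <= gidx t <= n - 1 -> 1 <= l <= n - 1 ->
  far l (gidx s) -> far l (gidx t) ->
  centralizer_mod n (gword y) (comm (gword s) (gword t)).
Proof.
  intros Hy Hs Ht Hl Fs Ft.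
  assert (Hl' : 1 <= gidx (reindex y l) <= n - 1) by now rewrite gidx_reindex.
  apply (centralizer_mod_of_commute n _ (gword (reindex y l))); auto with vb.
  - apply Gamma2_comm; auto with vb.
  - apply eqmod_Gamma2_sym, eqmod_Gamma2_reindex; auto.
  - apply commute_comm_l; apply commute_far_gens; rewrite ?gidx_reindex; auto;
      unfold far in *; lia.
Qed.

Lemma index_cases n i j : 5 <= n -> 1 <= i <= n - 1 -> 1 <= j <= n - 1 ->
  far i j \/ (2 <= i <= 3 /\ 2 <= j <= 3) \/
  exists l, 1 <= l <= n - 1 /\ far l i /\ far l j.
Proof.
  unfold far. intros Hn Hi Hj.
  destruct (Nat.le_gt_cases (i + 2) j); [left; lia|].
  destruct (Nat.le_gt_cases (j + 2) i); [left; lia|].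
  destruct (Nat.le_gt_cases 3 i), (Nat.le_gt_cases 3 j).
  - right; right. exists 1. lia.
  - right; left. lia.
  - right; left. lia.
  - right; right. exists 4. lia.
Qed.

Lemma centralizer_mod_comm_gens n y s t : 5 <= n ->
  1 <= gidx y <= n - 1 -> 1 <= gidx s <= n - 1 -> 1 <= gidx t <= n - 1 ->
  centralizer_mod n (gword y) (comm (gword s) (gword t)).
Proof.
  intros Hn Hy Hs Ht.
  assert (HC : is_normal n (centralizer_mod n (gword y))).
  { apply centralizer_mod_normal; auto with vb. }
  destruct (index_cases n (gidx s) (gidx t)) as [F | [[Hs23 Ht23] | (l & Hl & Fs & Ft)]]; auto.
  - apply (sub_trivial HC); auto with vb.
    now apply comm_trivial_of_commute, commute_far_gens.
  - pose proof (conjg_rho123_reindex_pred n s ltac:(lia) Hs23) as Es.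
    pose proof (conjg_rho123_reindex_pred n t ltac:(lia) Ht23) as Et.
    set (s0 := reindex s (gidx s - 1)) in Es. set (t0 := reindex t (gidx t - 1)) in Et.
    apply (sub_transport (conjg (comm (gword s0) (gword t0)) (winv rho123)) HC);
      auto with vb; [now rewrite conjg_comm, Es, Et|].
    apply (normal_conjg HC); [apply valid_winv, valid_rho123; lia|].
    apply (centralizer_mod_comm_gens_far n _ _ _ 4); unfold s0, t0, far;
      rewrite ?gidx_reindex; lia.
  - now apply (centralizer_mod_comm_gens_far n _ _ _ l).
Qed.

Lemma Gamma2_sub_centralizer_mod n y : 5 <= n -> 1 <= gidx y <= n - 1 ->
  forall w, Gamma2 n w -> centralizer_mod n (gword y) w.
Proof.
  intros Hn Hy. apply Gamma2_sub_normal.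
  - apply centralizer_mod_normal; auto with vb.
  - intros s t Hs Ht. now apply centralizer_mod_comm_gens.
Qed.

Lemma far_index_exists n j : 5 <= n -> 1 <= j <= n - 1 ->
  exists k, 1 <= k <= n - 1 /\ far k j.
Proof.
  unfold far. intros Hn Hj. destruct (Nat.le_gt_cases 3 j).
  - exists 1. lia.
  - exists 4. lia.
Qed.

Lemma Gamma2_derived_comm_gens n x y : 5 <= n ->
  1 <= gidx x <= n - 1 -> 1 <= gidx y <= n - 1 ->
  Gamma2_derived n (comm (gword x) (gword y)).
Proof.
  intros Hn Hx Hy. pose proof (Gamma2_derived_normal n) as HK.
  destruct (far_index_exists n (gidx y) Hn Hy) as (k & Hk & Fk).
  set (z := reindex x k).
  assert (Hz : 1 <= gidx z <= n - 1) by (unfold z; now rewrite gidx_reindex).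
  assert (Hh : eqmod_Gamma2 n (gword z) (gword x)).
  { apply eqmod_Gamma2_sym, eqmod_Gamma2_reindex; auto. }
  apply (sub_transport (comm (gword z ++ winv (gword z) ++ gword x) (gword y)) HK);
    auto with vb; [now rewrite veq_mulKV|].
  apply (normal_comm_app_l n _ HK); auto with vb.
  - apply (sub_trivial HK); auto with vb.
    apply comm_trivial_of_commute, commute_far_gens; auto. unfold z. now rewrite gidx_reindex.
  - now apply Gamma2_sub_centralizer_mod.
Qed.

Lemma Gamma2_sub_Gamma2_derived n : 5 <= n -> forall w, Gamma2 n w -> Gamma2_derived n w.
Proof.
  intros Hn. apply Gamma2_sub_normal; [apply Gamma2_derived_normal|].
  intros x y Hx Hy. now apply Gamma2_derived_comm_gens.
Qed.

Theorem proposition4p5 (n : nat) : 5 <= n ->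
  forall w : word, valid n w ->
    (Gamma2 n w <-> comm_sub n (Gamma2 n) (Gamma2 n) w).
Proof.
  intros Hn w _. split.
  - now apply Gamma2_sub_Gamma2_derived.
  - apply Gamma2_derived_sub_Gamma2.
Qed.
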